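(* Assume the setting described in the context. Let $P$ and $P'$ be p-matrices with $P'\subset P$, with columns $I_1,\dots,I_{p+q+2}$ and $J_1,\dots,J_{p+q+2}$ respectively, such that for every column $i$ the column $J_i$ is nested in $I_i$ in the sense described in the context, and let $K_i,L_i$ be as defined there. For $j=1,\dots,p+q+2$ form the p-matrices $(J_1,\dots,J_{j-1},K_j,I_{j+1},\dots,I_{p+q+2})$ and $(J_1,\dots,J_{j-1},L_j,I_{j+1},\dots,I_{p+q+2})$. Then these $2(p+q+2)$ p-matrices (of which the empty ones may be discarded) are pairwise disjoint, and their union is $P\setminus P'$.
   Context: $\mathbb N=\{0,1,2,\dots\}$. For $a\in\mathbb Z$, $b\in\mathbb Z\cup\{\infty\}$, $[a,b]=\{j\in\mathbb N:a\le j\le b\}$ (with $j<\infty$ if $b=\infty$). A p-matrix with data $\mathbf a\in\mathbb Z^p$, $\mathbf b\in(\mathbb Z\cup\{\infty\})^p$, $\mathbf c\in\mathbb Z^q$, $\mathbf d\in(\mathbb Z\cup\{\infty\})^q$, integer-valued functions $E,F$ on the block $[\mathbf a,\mathbf b]=\prod[a_i,b_i]$ and $G,H$ on $[\mathbf c,\mathbf d]=\prod[c_j,d_j]$, is the set $\{(\mathbf k;\boldsymbol\ell;s)\in\mathbb N^{p+q+1}:\mathbf k\in[\mathbf a,\mathbf b],\boldsymbol\ell\in[\mathbf c,\mathbf d],s\in[E(\mathbf k),F(\mathbf k)]\cap[G(\boldsymbol\ell),H(\boldsymbol\ell)]\}$. Its columns are: $I_i=[a_i,b_i]$ for $i\le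 p$ (constraint on $k_i$), $I_{p+j}=[c_j,d_j]$ for $j\le q$ (constraint on $\ell_j$), $I_{p+q+1}$ = the interval-valued function $\mathbf k\mapsto[E(\mathbf k),F(\mathbf k)]$ and $I_{p+q+2}$ = the function $\boldsymbol\ell\mapsto[G(\boldsymbol\ell),H(\boldsymbol\ell)]$ (constraints on $s$). A p-matrix is written as the tuple of its columns, and conversely any such tuple (integer intervals in the first $p+q$ positions, interval-valued functions of $\mathbf k$ resp. $\boldsymbol\ell$ in the last two, each defined on the block given by the corresponding first columns) defines a p-matrix. Nesting: for an integer-interval column $I_i=[u,v]$, $J_i=[u',v']$, nesting means $u\le u'\le v'+1\le v+1$ (with $\infty+1=\infty$); then $K_i=[u,u'-1]$ and $L_i=[v'+1,v]$ (empty if $v'=v=\infty$). For the $s$-columns nesting means this pointwise: $E(\mathbf k)\le E'(\mathbf k)\le F'(\mathbf k)+1\le F(\mathbf k)+1$ for every $\mathbf k$ in the $\mathbf k$-block of $P'$ (and likewise for $G,H$ versus $G',H'$ on the $\boldsymbol\ell$-block of $P'$), and $K_{p+q+1}$ is $\mathbf k\mapsto[E(\mathbf k),E'(\mathbf k)-1]$, $L_{p+q+1}$ is $\mathbf k\mapsto[F'(\mathbf k)+1,F(\mathbf k)]$, similarly for column $p+q+2$. Under nesting, $I_i\setminus J_i=K_i\sqcup L_i$. *)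

From mathcomp Require Import all_boot all_order all_algebra.
Set Implicit Arguments. Unset Strict Implicit. Unset Printing Implicit Defensive.
Import Order.TTheory GRing.Theory Num.Theory.
Local Open Scope ring_scope.

(* An integer interval [lo, hi] with lo in Z and hi in Z ∪ {∞} (None = ∞),
   viewed as a set of natural numbers j with lo <= j <= hi. *)
Record interval := Itv { lo : int; hi : option int }.

Definition in_itv (I : interval) (j : nat) : Prop :=
  lo I <= j%:Z /\ (forall h, hi I = Some h -> j%:Z <= h).

(* A p-matrix: integer-interval columns for k (p of them) and l (q of them),
   and the two s-columns k |-> [E k, F k] and l |-> [G l, H l]
   (given as total functions; only their values on the blocks matter). *)
Record pmat (p q : nat) := PMat {
  kcol : 'I_p -> interval;
  lcol : 'I_q -> interval;
  ecol : ('I_p -> nat) -> int * int;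
  gcol : ('I_q -> nat) -> int * int
}.

Definition in_kblock p q (P : pmat p q) (k : 'I_p -> nat) : Prop :=
  forall i, in_itv (kcol P i) (k i).
Definition in_lblock p q (P : pmat p q) (l : 'I_q -> nat) : Prop :=
  forall j, in_itv (lcol P j) (l j).

Definition in_s (EF : int * int) (s : nat) : Prop := EF.1 <= s%:Z <= EF.2.

Definition pmem p q (P : pmat p q) (k : 'I_p -> nat) (l : 'I_q -> nat) (s : nat)
  : Prop :=
  [/\ in_kblock P k, in_lblock P l, in_s (ecol P k) s & in_s (gcol P l) s].

(* Nesting of integer intervals J = [u', v'] in I = [u, v]:
   u <= u' <= v' + 1 <= v + 1  (with ∞ + 1 = ∞). *)
Definition nested_itv (I J : interval) : Prop :=
  [/\ lo I <= lo J,
      (forall v', hi J = Some v' -> lo J <= v' + 1) &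
      (match hi I, hi J with
       | None, _ => True
       | Some v, Some v' => v' <= v
       | Some _, None => False
       end)].

Definition Kitv (I J : interval) : interval := Itv (lo I) (Some (lo J - 1)).
(* L = [v' + 1, v], empty when v' = v = ∞ (encoded as [1, 0]). *)
Definition Litv (I J : interval) : interval :=
  match hi J with
  | Some v' => Itv (v' + 1) (hi I)
  | None => Itv 1 (Some 0)
  end.

Definition nested_s (EF EF' : int * int) : Prop :=
  EF.1 <= EF'.1 /\ EF'.1 <= EF'.2 + 1 /\ EF'.2 + 1 <= EF.2 + 1.

Definition Ks (EF EF' : int * int) : int * int := (EF.1, EF'.1 - 1).
Definition Ls (EF EF' : int * int) : int * int := (EF'.2 + 1, EF.2).

(* Column selector: column number i (0-based) compared with j:
   i < j -> J_i (from P'), i = j -> the new column, i > j -> I_i (from P). *)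
Definition pick T (i j : nat) (Jc X Ic : T) : T :=
  if (i < j)%N then Jc else if i == j then X else Ic.

(* Columns are numbered
   0-based: 0..p-1 are the k-columns, p..p+q-1 the l-columns, p+q the
   (E,F)-column and p+q+1 the (G,H)-column. *)
Definition hybrid p q (P P' : pmat p q) (j : 'I_(p + q + 2)) (b : bool)
  : pmat p q :=
  PMat
    (fun i => pick i j (kcol P' i)
        ((if b then Kitv else Litv) (kcol P i) (kcol P' i)) (kcol P i))
    (fun i => pick (p + i) j (lcol P' i)
        ((if b then Kitv else Litv) (lcol P i) (lcol P' i)) (lcol P i))
    (fun k => pick (p + q) j (ecol P' k)
        ((if b then Ks else Ls) (ecol P k) (ecol P' k)) (ecol P k))
    (fun l => pick (p + q + 1) j (gcol P' l)
        ((if b then Ks else Ls) (gcol P l) (gcol P' l)) (gcol P l)).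

(* A point of P \ P' has a first
   column j in which it leaves P'; it lies in the columns of P' before j, in
   K_j or L_j (which partition I_j \ J_j) at j, and in the columns of P after
   j, i.e. in exactly one of the hybrid p-matrices.  Conversely a point of a
   hybrid lies in P (each J_c, K_c, L_c is inside I_c) but not in P' (it
   misses J_j).  Nesting of the s-columns is only assumed over the k- resp.
   l-block of P', which is precisely what the prefix before j provides. *)

From Pilot Require Import Defs.
From mathcomp Require Import all_boot all_order all_algebra zify.
From Stdlib Require Import Classical.
(* Imported again so that [pick] is the column selector of Defs, not fintype's. *)
Import Defs.
Set Implicit Arguments. Unset Strict Implicit. Unset Printing Implicit Defensive.

Definition nested_partition (a b k l : Prop) : Prop :=
  [/\ b -> a, k -> a /\ ~ b, l -> a /\ ~ b, a -> ~ b -> k \/ l & ~ (k /\ l)].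

Lemma nested_partition_iff (a b k l a' b' k' l' : Prop) :
  (a <-> a') -> (b <-> b') -> (k <-> k') -> (l <-> l') ->
  nested_partition a' b' k' l' -> nested_partition a b k l.
Proof. by move=> ? ? ? ? [? ? ? ? ?]; split; tauto. Qed.

Lemma first_failure (P : nat -> Prop) n :
  ~ (forall c, c < n -> P c) -> exists2 j, j < n & (forall c, c < j -> P c) /\ ~ P j.
Proof.
elim: n => [|n IHn] notP; first by case: notP.
have [allP | /IHn [j ltjn Pj]] := classic (forall c, c < n -> P c).
  exists n => //; split=> // Pn; apply: notP => c; rewrite ltnS leq_eqVlt.
  by case/orP=> [/eqP -> | /allP].
by exists j => //; apply: ltnW.
Qed.

Section Telescope.
Variables (n : nat) (A B : nat -> Prop) (KL : bool -> nat -> Prop).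
Hypothesis partitionA : forall c, c < n -> (forall c', c' < c -> B c') ->
  nested_partition (A c) (B c) (KL true c) (KL false c).

Definition layer (j : nat) (b : bool) : Prop :=
  forall c, c < n -> pick c j (B c) (KL b c) (A c).

Lemma layerP j b : j < n ->
  layer j b <-> [/\ forall c, c < j -> B c, KL b j & forall c, j < c < n -> A c].
Proof.
move=> ltjn; rewrite /layer /pick; split=> [lay | [Bj Xj Aj] c ltcn].
  split=> [c ltcj | | c /andP [ltjc ltcn]].
  - by have := lay c (ltn_trans ltcj ltjn); rewrite ltcj.
  - by have := lay j ltjn; rewrite ltnn eqxx.
  - by have := lay c ltcn; rewrite ltnNge (ltnW ltjc) gtn_eqF.
by case: ltngtP => [ltcj | ltjc | ->]; [apply: Bj | apply: Aj; rewrite ltjc | ].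
Qed.

Lemma layer_notB j b : j < n -> layer j b -> ~ B j.
Proof.
move=> ltjn /(layerP _ ltjn) [Bj Xj _].
by have [_ XK XL _ _] := partitionA ltjn Bj; case: b Xj => [/XK | /XL] [].
Qed.

Lemma layer_disjoint j1 j2 b1 b2 : j1 < n -> j2 < n ->
  layer j1 b1 -> layer j2 b2 -> j1 = j2 /\ b1 = b2.
Proof.
move=> ltj1 ltj2 lay1 lay2.
have [ltj12 | ltj21 | eqj] := ltngtP j1 j2.
- by case: (layer_notB ltj1 lay1); case/(layerP _ ltj2): lay2 => + _ _; apply.
- by case: (layer_notB ltj2 lay2); case/(layerP _ ltj1): lay1 => + _ _; apply.
move: eqj lay2 => <- /(layerP _ ltj1) [_ X2 _]; split=> //.
case/(layerP _ ltj1): lay1 => Bj X1 _; have [_ _ _ _ notKL] := partitionA ltj1 Bj.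
by case: b1 b2 X1 X2 => [] [] // X1 X2; case: notKL.
Qed.

Lemma layer_cover :
  (exists2 j, j < n & exists b, layer j b) <->
  (forall c, c < n -> A c) /\ ~ (forall c, c < n -> B c).
Proof.
split=> [[j ltjn [b lay]] | [allA /first_failure [j ltjn [Bj notBj]]]].
  split; last by move=> allB; apply: (layer_notB ltjn lay); apply: allB.
  case/(layerP _ ltjn): lay => Bj Xj Aj c ltcn.
  have [ltcj | ltjc | ->] := ltngtP c j.
  - have [BA _ _ _ _] := partitionA ltcn (fun c' ltc' => Bj c' (ltn_trans ltc' ltcj)).
    exact/BA/Bj.
  - by apply: Aj; rewrite ltjc.
  - by have [_ XK XL _ _] := partitionA ltjn Bj; case: b Xj => [/XK | /XL] [].
have [_ _ _ /(_ (allA j ltjn) notBj) KorL _] := partitionA ltjn Bj.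
exists j => //; case: KorL => [Kj | Lj]; [exists true | exists false];
  by apply/layerP => //; split=> // c /andP [_]; apply: allA.
Qed.
End Telescope.

Section Columns.
Local Open Scope ring_scope.

Lemma in_itv_fin (u v : int) (x : nat) : in_itv (Itv u (Some v)) x <-> u <= x%:Z <= v.
Proof.
split=> [[le_ux /(_ v erefl) le_xv] | /andP [le_ux le_xv]]; first exact/andP.
by split=> // h [<-].
Qed.

Lemma in_itv_inf (u : int) (x : nat) : in_itv (Itv u None) x <-> u <= x%:Z.
Proof. by split=> [[] | le_ux]. Qed.

Lemma nested_itv_partition (I J : interval) (x : nat) : nested_itv I J ->
  nested_partition (in_itv I x) (in_itv J x) (in_itv (Kitv I J) x) (in_itv (Litv I J) x).
Proof.
case: I J => [u [v|]] [u' [v'|]] [/= le_uu' le_u'v'] //; rewrite /Kitv /Litv /=.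
all: move=> le_v'v; apply: nested_partition_iff;
  try (by apply: in_itv_fin); try (by apply: in_itv_inf).
all: try have := le_u'v' _ erefl.
all: by move=> *; split=> *; lia.
Qed.

Lemma nested_s_partition (EF EF' : int * int) (x : nat) : nested_s EF EF' ->
  nested_partition (in_s EF x) (in_s EF' x) (in_s (Ks EF EF') x) (in_s (Ls EF EF') x).
Proof.
by case: EF EF' => [a b] [a' b']; rewrite /nested_s /in_s /= => ?; split=> *; lia.
Qed.
End Columns.

Section PMatColumns.
Variables (p q : nat).
Implicit Types (T : pmat p q) (k : 'I_p -> nat) (l : 'I_q -> nat) (s c : nat).

(* Columns are numbered as in [hybrid]; for c >= p + q + 2 this is [True]. *)
Definition in_col T c k l s : Prop :=
  [/\ forall i : 'I_p, i = c :> nat -> in_itv (kcol T i) (k i),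
      forall i : 'I_q, p + i = c -> in_itv (lcol T i) (l i),
      c = p + q -> in_s (ecol T k) s &
      c = p + q + 1 -> in_s (gcol T l) s].

Definition kl_pmat (P P' : pmat p q) (b : bool) : pmat p q :=
  PMat (fun i => (if b then Kitv else Litv) (kcol P i) (kcol P' i))
       (fun i => (if b then Kitv else Litv) (lcol P i) (lcol P' i))
       (fun k => (if b then Ks else Ls) (ecol P k) (ecol P' k))
       (fun l => (if b then Ks else Ls) (gcol P l) (gcol P' l)).

Lemma in_col_k T c k l s (i : 'I_p) : i = c :> nat ->
  in_col T c k l s <-> in_itv (kcol T i) (k i).
Proof.
move=> <-; split=> [[/(_ i erefl) //] | Ti]; have ltip := ltn_ord i.
by split=> [i' /val_inj -> // | i' | | ]; lia.
Qed.

Lemma in_col_l T c k l s (i : 'I_q) : p + i = c ->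
  in_col T c k l s <-> in_itv (lcol T i) (l i).
Proof.
move=> <-; split=> [[_ /(_ i erefl) //] | Ti]; have ltiq := ltn_ord i.
split=> [i' | i' /eqP | | ]; try lia; first by have := ltn_ord i'; lia.
by rewrite eqn_add2l => /eqP/val_inj ->.
Qed.

Lemma in_col_e T c k l s : c = p + q -> in_col T c k l s <-> in_s (ecol T k) s.
Proof.
move=> ->; split=> [[_ _ /(_ erefl) //] | Ts].
by split=> [i' | i' | // | ] *; try lia; have := ltn_ord i'; lia.
Qed.

Lemma in_col_g T c k l s : c = p + q + 1 -> in_col T c k l s <-> in_s (gcol T l) s.
Proof.
move=> ->; split=> [[_ _ _ /(_ erefl) //] | Ts].
by split=> [i' | i' | | //] *; try lia; have := ltn_ord i'; lia.
Qed.

Lemma pmem_in_col T k l s :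
  pmem T k l s <-> forall c, c < p + q + 2 -> in_col T c k l s.
Proof.
split=> [[Tk Tl Te Tg] c _ | Tc].
  by split=> [i _ | i _ | _ | _]; [apply: Tk | apply: Tl | | ].
split=> [i | i | | ].
- by apply/(in_col_k _ _ _ _ (erefl (nat_of_ord i)))/Tc; have := ltn_ord i; lia.
- by apply/(in_col_l _ _ _ _ (erefl (p + i)))/Tc; have := ltn_ord i; lia.
- by apply/(in_col_e _ _ _ _ erefl)/Tc; lia.
- by apply/(in_col_g _ _ _ _ erefl)/Tc; lia.
Qed.

Lemma in_col_hybrid P P' (j : 'I_(p + q + 2)) b c k l s :
  in_col (hybrid P P' j b) c k l s <->
  pick c j (in_col P' c k l s) (in_col (kl_pmat P P' b) c k l s) (in_col P c k l s).
Proof.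
rewrite /in_col /hybrid /pick /=.
case: (boolP (c < j)) => ltcj; [|case: (boolP (c == j)) => eqcj].
all: rewrite ?ltcj ?eqcj ?(negbTE ltcj) ?(negbTE eqcj).
all: split; (case=> Tk Tl Te Tg; split => [i ic | i ic | ec | ec];
  [move: (Tk i ic) | move: (Tl i ic) | move: (Te ec) | move: (Tg ec)]).
all: by subst c; rewrite ?ltcj ?eqcj ?(negbTE ltcj) ?(negbTE eqcj).
Qed.

Lemma in_kblock_prefix T k l s :
  (forall c, c < p -> in_col T c k l s) -> in_kblock T k.
Proof. by move=> pre i; apply/(in_col_k _ _ _ _ (erefl (nat_of_ord i)))/pre. Qed.

Lemma in_lblock_prefix T k l s :
  (forall c, c < p + q -> in_col T c k l s) -> in_lblock T l.
Proof.
move=> pre i; apply/(in_col_l _ _ _ _ (erefl (p + i)))/pre.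
by rewrite ltn_add2l.
Qed.
End PMatColumns.

Section NestedPMat.
Variables (p q : nat) (P P' : pmat p q).
Hypotheses (nestedK : forall i, nested_itv (kcol P i) (kcol P' i))
  (nestedL : forall i, nested_itv (lcol P i) (lcol P' i))
  (nestedE : forall k, in_kblock P' k -> nested_s (ecol P k) (ecol P' k))
  (nestedG : forall l, in_lblock P' l -> nested_s (gcol P l) (gcol P' l)).

Lemma in_col_partition k l s c : c < p + q + 2 ->
  (forall c', c' < c -> in_col P' c' k l s) ->
  nested_partition (in_col P c k l s) (in_col P' c k l s)
    (in_col (kl_pmat P P' true) c k l s) (in_col (kl_pmat P P' false) c k l s).
Proof.
move=> ltcn pre; have [ltcp | lepc] := ltnP c p.
  pose i := Ordinal ltcp.
  apply: nested_partition_iff (nested_itv_partition (k i) (nestedK i));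
  by apply: in_col_k.
have [ltcpq | lepqc] := ltnP c (p + q).
  have ltcq : c - p < q by rewrite ltn_subLR.
  pose i := Ordinal ltcq; have pic : p + i = c by rewrite /= subnKC.
  apply: nested_partition_iff (nested_itv_partition (l i) (nestedL i));
  by apply: in_col_l.
have inK : in_kblock P' k.
  by apply: (in_kblock_prefix (l := l) (s := s)) => c' ltc'p; apply: pre; lia.
have [eqc | neqc] := eqVneq c (p + q).
  apply: nested_partition_iff (nested_s_partition s (nestedE inK));
  by apply: in_col_e.
have eqc : c = p + q + 1 by lia.
have inL : in_lblock P' l.
  by apply: (in_lblock_prefix (k := k) (s := s)) => c' ltc'pq; apply: pre; lia.
apply: nested_partition_iff (nested_s_partition s (nestedG inL));
by apply: in_col_g.
Qed.
End NestedPMat.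

Theorem theorem14p2 (p q : nat) (P P' : pmat p q) :
  (forall k l s, pmem P' k l s -> pmem P k l s) ->
  (forall i, nested_itv (kcol P i) (kcol P' i)) ->
  (forall i, nested_itv (lcol P i) (lcol P' i)) ->
  (forall k, in_kblock P' k -> nested_s (ecol P k) (ecol P' k)) ->
  (forall l, in_lblock P' l -> nested_s (gcol P l) (gcol P' l)) ->
  (forall (j1 j2 : 'I_(p + q + 2)) (b1 b2 : bool) k l s,
      pmem (hybrid P P' j1 b1) k l s -> pmem (hybrid P P' j2 b2) k l s ->
      j1 = j2 /\ b1 = b2) /\
  (forall k l s,
      (exists (j : 'I_(p + q + 2)) (b : bool), pmem (hybrid P P' j b) k l s)
      <-> (pmem P k l s /\ ~ pmem P' k l s)).
Proof.
move=> _ nestedK nestedL nestedE nestedG.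
have partition k l s :=
  @in_col_partition p q P P' nestedK nestedL nestedE nestedG k l s.
have hybrid_layer j b k l s : pmem (hybrid P P' j b) k l s <->
    layer (p + q + 2) (fun c => in_col P c k l s) (fun c => in_col P' c k l s)
      (fun b c => in_col (kl_pmat P P' b) c k l s) j b.
  by rewrite pmem_in_col; split=> lay c /lay /in_col_hybrid.
split=> [j1 j2 b1 b2 k l s /hybrid_layer lay1 /hybrid_layer lay2 | k l s].
  by have [/val_inj] :=
    layer_disjoint (partition k l s) (ltn_ord j1) (ltn_ord j2) lay1 lay2.
have cover := layer_cover
  (KL := fun b c => in_col (kl_pmat P P' b) c k l s) (partition k l s).
rewrite !pmem_in_col; split.
  by case=> j [b /hybrid_layer lay]; apply/cover; exists j => //; exists b.
by case/cover=> j ltjn [b lay]; exists (Ordinal ltjn), b; apply/hybrid_layer.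
Qed.
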